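(* Assume (R) and (F), and assume $0<q_t<1$ for all $t=0,\dots,T-1$. For $\alpha\in(0,\infty)^T$ let $H_\alpha(Z)$ denote the indifference price of $Z$ for the utilities $u_t(x;\alpha)=\frac{1}{\alpha_t}[1-\exp(-\alpha_tx)]$. Let $Z\in L^\infty$ with representation $Z=\sum_{t=1}^Tz_t1_{(t-1<\tau\le t)}+z_{T+1}1_{(T<\tau)}$ and set $H_\infty(Z)=\max\{z_1,\dots,z_{T+1}\}$. Then: (a) $E[Z]\le H_\alpha(Z)\le H_\infty(Z)$ for all $\alpha\in(0,\infty)^T$; (b) $H_\alpha(Z)\to E[Z]$ as $\alpha\to0+$ (i.e. $\alpha_t\to0+$ for all $t$); (c) $H_\alpha(Z)\to H_\infty(Z)$ as $\alpha\to\infty$ (i.e. $\alpha_t\to\infty$ for all $t$); (d) for every $\pi\in(E[Z],H_\infty(Z))$ and every $\alpha=(\alpha_1,\dots,\alpha_T)\in(0,\infty)^T$ there exists $p\in(0,\infty)$ with $\pi=H_{p\alpha}(Z)$, where $p\alpha=(p\alpha_1,\dots,p\alpha_T)$.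
   Context: Let $T\ge1$, $\mathbb{T}=\{1,\dots,T\}$, and $(\Omega,\mathcal{F},P)$ a probability space carrying a random variable $\tau$ with $\tau(\omega)>0$ for all $\omega$ and $P(\tau=s)=0$ for all $s\in[0,\infty)$. Let $D_t=1_{(\tau\le t)}$ for $t=0,\dots,T$ and $\mathcal{H}_t=\sigma(D_s:s=0,\dots,t)$. Condition (F): the filtration is $\mathcal{F}_t=\mathcal{H}_t$; $L^\infty=L^\infty(\Omega,\mathcal{F}_T,P)$. Condition (R): the interest rates $r_t\ge0$ are deterministic; $B_0=1$, $B_t=\prod_{k=1}^t(1+r_k)$, $\tilde X_t=X_t/B_t$. For $W\in L^\infty$, $\mathcal{A}(W)$ is the set of adapted processes $(Y_t)_{t\in\mathbb{T}}$ with $Y_t\in L^\infty$ and $\sum_t\tilde Y_t=W$ a.s.; $U_\alpha(W)=\sup\{\sum_tE[u_t(\tilde Y_t;\alpha)]:(Y_t)\in\mathcal{A}(W)\}$; the indifference price $H_\alpha(Z)$ (with initial wealth $w$; it does not depend on $w$) is the real number with $U_\alpha(w+H_\alpha(Z)-Z)=U_\alpha(w)$. Let $q_t=P(\tau\le t+1\mid\tau>t)$, $p_t=1-q_t$ for $t=0,\dots,T-1$. *)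

From Stdlib Require Import Reals Lra Lia ClassicalEpsilon.
Open Scope R_scope.

(* Finite-atom model of the setting under condition (F).
   Atom k (1 <= k <= T) is the event (k-1 < tau <= k); atom T+1 is (tau > T).
   Since tau > 0 and F_T = H_T = sigma(D_0..D_T), every element of
   L^infty(F_T) is (a.s.) a function of the atom index, and only the
   probabilities P k of the atoms matter.  Random variables are thus
   functions nat -> R evaluated at k = 1..T+1. *)

Fixpoint sum_1n (n : nat) (f : nat -> R) : R :=
  match n with
  | O => 0
  | S n' => sum_1n n' f + f n
  end.

Fixpoint prod_1n (n : nat) (f : nat -> R) : R :=
  match n with
  | O => 1
  | S n' => prod_1n n' f * f n
  end.

Definition is_atom_law (T : nat) (P : nat -> R) : Prop :=
  (forall k, (1 <= k <= T + 1)%nat -> 0 <= P k) /\ sum_1n (T + 1) P = 1.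

(* survival probability P(tau > t) = P(atoms k > t) *)
Definition surv (T : nat) (P : nat -> R) (t : nat) : R := 1 - sum_1n t P.

(* q_t = P(tau <= t+1 | tau > t) = P(t < tau <= t+1) / P(tau > t) *)
Definition qprob (T : nat) (P : nat -> R) (t : nat) : R :=
  P (S t) / surv T P t.

Definition Expect (T : nat) (P : nat -> R) (X : nat -> R) : R :=
  sum_1n (T + 1) (fun k => P k * X k).

Definition Bdisc (r : nat -> R) (t : nat) : R := prod_1n t (fun k => 1 + r k).

Definition uexp (alpha : nat -> R) (t : nat) (x : R) : R :=
  / alpha t * (1 - exp (- alpha t * x)).

(* Y : time -> atom -> R is adapted to (H_t): Y_t is H_t-measurable, i.e.
   it distinguishes the atoms k <= t individually and is constant on {tau > t}
   = {k > t}. (Bounded automatically: finitely many atoms.) *)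
Definition adapted (T : nat) (Y : nat -> nat -> R) : Prop :=
  forall t k k', (1 <= t <= T)%nat -> (1 <= k <= T + 1)%nat ->
    (1 <= k' <= T + 1)%nat -> (t < k)%nat -> (t < k')%nat -> Y t k = Y t k'.

Definition budget (T : nat) (P : nat -> R) (r : nat -> R)
    (Y : nat -> nat -> R) (W : nat -> R) : Prop :=
  forall k, (1 <= k <= T + 1)%nat -> 0 < P k ->
    sum_1n T (fun t => Y t k / Bdisc r t) = W k.

Definition exp_util (T : nat) (P : nat -> R) (r : nat -> R) (alpha : nat -> R)
    (Y : nat -> nat -> R) : R :=
  sum_1n T (fun t => Expect T P (fun k => uexp alpha t (Y t k / Bdisc r t))).

Definition attainable (T : nat) (P : nat -> R) (r : nat -> R) (alpha : nat -> R)
    (W : nat -> R) (v : R) : Prop :=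
  exists Y, adapted T Y /\ budget T P r Y W /\ v = exp_util T P r alpha Y.

Definition Uval (T : nat) (P : nat -> R) (r : nat -> R) (alpha : nat -> R)
    (W : nat -> R) : R :=
  epsilon (inhabits 0) (fun u => is_lub (attainable T P r alpha W) u).

Definition Hprice (T : nat) (P : nat -> R) (r : nat -> R) (alpha : nat -> R)
    (w : R) (Z : nat -> R) : R :=
  epsilon (inhabits 0) (fun h =>
    Uval T P r alpha (fun k => w + h - Z k) = Uval T P r alpha (fun _ => w)).

Fixpoint max_1n (n : nat) (f : nat -> R) : R :=
  match n with
  | O => f O (* unused for n >= 1 *)
  | S O => f 1%nat
  | S n' => Rmax (max_1n n' f) (f n)
  end.

Definition Hinf (T : nat) (Z : nat -> R) : R := max_1n (T + 1) Z.

From Stdlib Require Import Reals Lra Lia ClassicalEpsilon FunctionalExtensionality Ranalysis5.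
Open Scope R_scope.

(* With exponential utilities the value function is translation-equivariant: spreading a
   sure amount c over the dates in proportion to the risk tolerances 1/alpha_t turns U(W)
   into K - exp(-c/K) (K - U(W)), where K = sum_t 1/alpha_t.  Hence the certainty equivalent
   CE(W) := -K ln((K - U(W))/K) satisfies CE(W + c) = CE(W) + c, and the indifference price
   is H_alpha(Z) = -CE(-Z).  Three estimates of U then give the bounds: u_t(x) <= x gives
   CE(W) <= E[W]; consuming everything at maturity gives U(W) >= E[u_T(W)], hence
   H_alpha(Z) <= H_infty(Z) and, via exp y <= 1 + y + 2y^2, H_alpha(Z) <= E[Z] + 2 alpha_T B^2;
   u_t <= 1/alpha_t together with a nonpositive wealth on the atom where Z is maximal gives
   H_alpha(Z) >= H_infty(Z) + K ln P(atom).  For (d), rescaling consumption plans shows that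
   p |-> p H_{p alpha}(Z) is Lipschitz, and the intermediate value theorem applies between a
   small p (price near E[Z]) and a large p (price near H_infty(Z)). *)

Lemma exp_le_mono x y : x <= y -> exp x <= exp y.
Proof. intros [Hlt | ->]; [left; apply exp_increasing | right]; auto. Qed.

Lemma ln_le_mono x y : 0 < x -> x <= y -> ln x <= ln y.
Proof. intros Hx [Hlt | ->]; [left; apply ln_increasing | right]; auto. Qed.

Lemma ln_le_sub1 x : 0 < x -> ln x <= x - 1.
Proof. intros Hx. pose proof (exp_ineq1_le (ln x)). rewrite exp_ln in H; lra. Qed.

Lemma exp_le_quadratic y : y <= 1/2 -> exp y <= 1 + y + 2 * y ^ 2.
Proof.
  intros Hy. pose proof (exp_ineq1_le (- y)). pose proof (exp_pos y).
  assert (exp y * exp (- y) = 1) by (rewrite <- exp_plus, Rplus_opp_r; apply exp_0).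
  assert (1 <= (1 + y + 2 * y ^ 2) * (1 - y)) by nra.
  nra.
Qed.

Lemma continuity_pt_of_lipschitz_pos (f : R -> R) (L a : R) :
  0 <= L -> (forall x y, 0 < x -> 0 < y -> Rabs (f x - f y) <= L * Rabs (x - y)) ->
  0 < a -> continuity_pt f a.
Proof.
  intros HL Hf Ha eps Heps.
  exists (Rmin a (eps / (L + 1))). split; [apply Rmin_pos; [lra | apply Rdiv_lt_0_compat; lra] |].
  intros x [_ Hx]. simpl in *. unfold R_dist in *.
  pose proof (Rmin_l a (eps / (L + 1))). pose proof (Rmin_r a (eps / (L + 1))).
  assert (Hx0 : 0 < x) by (pose proof (Rle_abs (a - x)); rewrite Rabs_minus_sym in Hx; lra).
  assert (Hsmall : Rabs (x - a) * (L + 1) < eps).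
  { apply (Rmult_lt_compat_r (L + 1)) in Hx; [| lra].
    assert (Rmin a (eps / (L + 1)) * (L + 1) <= eps / (L + 1) * (L + 1))
      by (apply Rmult_le_compat_r; lra).
    replace (eps / (L + 1) * (L + 1)) with eps in H1 by (field; lra). lra. }
  pose proof (Hf x a Hx0 Ha). pose proof (Rabs_pos (x - a)).
  assert (L * Rabs (x - a) <= Rabs (x - a) * (L + 1)) by (rewrite Rmult_plus_distr_l, Rmult_comm; lra).
  lra.
Qed.

Lemma sum_1n_ext n f g : (forall k, (1 <= k <= n)%nat -> f k = g k) -> sum_1n n f = sum_1n n g.
Proof.
  induction n; simpl; intros H; auto.
  rewrite IHn by (intros; apply H; lia). rewrite (H (S n)) by lia. auto.
Qed.

Lemma sum_1n_le n f g : (forall k, (1 <= k <= n)%nat -> f k <= g k) -> sum_1n n f <= sum_1n n g.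
Proof.
  induction n; simpl; intros H; [lra |].
  pose proof (H (S n) ltac:(lia)). pose proof (IHn ltac:(intros; apply H; lia)). lra.
Qed.

Lemma sum_1n_add n f g : sum_1n n (fun k => f k + g k) = sum_1n n f + sum_1n n g.
Proof. induction n; simpl; [lra |]. rewrite IHn; ring. Qed.

Lemma sum_1n_scal n c f : sum_1n n (fun k => c * f k) = c * sum_1n n f.
Proof. induction n; simpl; [ring |]. rewrite IHn; ring. Qed.

Lemma sum_1n_sub n f g : sum_1n n (fun k => f k - g k) = sum_1n n f - sum_1n n g.
Proof. induction n; simpl; [ring |]. rewrite IHn; ring. Qed.

Lemma sum_1n_const n c : sum_1n n (fun _ => c) = INR n * c.
Proof. induction n; simpl sum_1n; [simpl; ring |]. rewrite IHn, S_INR; ring. Qed.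

Lemma sum_1n_comm n m (f : nat -> nat -> R) :
  sum_1n n (fun t => sum_1n m (fun k => f t k)) = sum_1n m (fun k => sum_1n n (fun t => f t k)).
Proof.
  induction n; simpl.
  - rewrite sum_1n_const; ring.
  - rewrite IHn, <- sum_1n_add. auto.
Qed.

Lemma sum_1n_nonneg n f : (forall k, (1 <= k <= n)%nat -> 0 <= f k) -> 0 <= sum_1n n f.
Proof. intros H. rewrite <- (Rmult_0_r (INR n)), <- sum_1n_const. apply sum_1n_le; auto. Qed.

Lemma sum_1n_ge_term n f j :
  (forall k, (1 <= k <= n)%nat -> 0 <= f k) -> (1 <= j <= n)%nat -> f j <= sum_1n n f.
Proof.
  induction n; simpl; intros H Hj; [lia |].
  destruct (Nat.eq_dec j (S n)) as [-> | Hne].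
  - pose proof (sum_1n_nonneg n f ltac:(intros; apply H; lia)). lra.
  - pose proof (H (S n) ltac:(lia)). pose proof (IHn ltac:(intros; apply H; lia) ltac:(lia)). lra.
Qed.

Lemma sum_1n_last n f : (1 <= n)%nat -> (forall k, (1 <= k < n)%nat -> f k = 0) -> sum_1n n f = f n.
Proof.
  intros Hn H. destruct n as [| n]; [lia |]. simpl.
  rewrite (sum_1n_ext n f (fun _ => 0)), sum_1n_const by (intros; apply H; lia). ring.
Qed.

Lemma sum_1n_abs_bound n f : exists b, 0 <= b /\ forall k, (1 <= k <= n)%nat -> Rabs (f k) <= b.
Proof.
  exists (sum_1n n (fun k => Rabs (f k))). split.
  - apply sum_1n_nonneg. intros; apply Rabs_pos.
  - intros k Hk. apply (sum_1n_ge_term n (fun k => Rabs (f k))); auto. intros; apply Rabs_pos.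
Qed.

Lemma max_1n_ge n f : (1 <= n)%nat -> forall k, (1 <= k <= n)%nat -> f k <= max_1n n f.
Proof.
  induction n as [| n IHn]; intros Hn k Hk; [lia |]. destruct n.
  - replace k with 1%nat by lia. simpl; lra.
  - change (max_1n (S (S n)) f) with (Rmax (max_1n (S n) f) (f (S (S n)))).
    destruct (Nat.eq_dec k (S (S n))) as [-> | Hne]; [apply Rmax_r |].
    eapply Rle_trans; [apply IHn; lia | apply Rmax_l].
Qed.

Lemma max_1n_attained n f : (1 <= n)%nat -> exists j, (1 <= j <= n)%nat /\ max_1n n f = f j.
Proof.
  induction n as [| n IHn]; intros Hn; [lia |]. destruct n.
  - exists 1%nat. split; [lia | auto].
  - change (max_1n (S (S n)) f) with (Rmax (max_1n (S n) f) (f (S (S n)))).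
    destruct (IHn ltac:(lia)) as (j & Hj & E). unfold Rmax.
    destruct (Rle_dec (max_1n (S n) f) (f (S (S n)))).
    + exists (S (S n)). split; [lia | auto].
    + exists j. split; [lia | auto].
Qed.

Lemma Expect_ext T P f g : (forall k, (1 <= k <= T + 1)%nat -> f k = g k) -> Expect T P f = Expect T P g.
Proof. intros H. apply sum_1n_ext. intros k Hk. rewrite H; auto. Qed.

Lemma Expect_le T P f g : (forall k, (1 <= k <= T + 1)%nat -> 0 <= P k) ->
  (forall k, (1 <= k <= T + 1)%nat -> f k <= g k) -> Expect T P f <= Expect T P g.
Proof. intros HP H. apply sum_1n_le. intros k Hk. apply Rmult_le_compat_l; auto. Qed.

Lemma Expect_nonneg T P f : (forall k, (1 <= k <= T + 1)%nat -> 0 <= P k) ->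
  (forall k, (1 <= k <= T + 1)%nat -> 0 <= f k) -> 0 <= Expect T P f.
Proof. intros HP H. apply sum_1n_nonneg. intros k Hk. apply Rmult_le_pos; auto. Qed.

Lemma Expect_add T P f g : Expect T P (fun k => f k + g k) = Expect T P f + Expect T P g.
Proof. unfold Expect. rewrite <- sum_1n_add. apply sum_1n_ext; intros; ring. Qed.

Lemma Expect_scal T P c f : Expect T P (fun k => c * f k) = c * Expect T P f.
Proof. unfold Expect. rewrite <- sum_1n_scal. apply sum_1n_ext; intros; ring. Qed.

Lemma Expect_opp T P f : Expect T P (fun k => - f k) = - Expect T P f.
Proof. rewrite <- (Rmult_1_l (Expect T P f)), Ropp_mult_distr_l, <- Expect_scal.
  apply Expect_ext; intros; ring. Qed.

Lemma Expect_const T P c : sum_1n (T + 1) P = 1 -> Expect T P (fun _ => c) = c.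
Proof.
  intros H. unfold Expect. rewrite (sum_1n_ext _ _ (fun k => c * P k)) by (intros; ring).
  rewrite sum_1n_scal, H; ring.
Qed.

Lemma uexp_le_id alpha t x : 0 < alpha t -> uexp alpha t x <= x.
Proof.
  intros Ha. unfold uexp. pose proof (exp_ineq1_le (- alpha t * x)).
  apply (Rmult_le_reg_l (alpha t)); auto. rewrite <- Rmult_assoc, Rinv_r; lra.
Qed.

Lemma uexp_le_inv alpha t x : 0 < alpha t -> uexp alpha t x <= / alpha t.
Proof.
  intros Ha. unfold uexp. pose proof (exp_pos (- alpha t * x)). pose proof (Rinv_0_lt_compat _ Ha).
  nra.
Qed.

Lemma uexp_nonneg alpha t x : 0 < alpha t -> 0 <= x -> 0 <= uexp alpha t x.
Proof.
  intros Ha Hx. unfold uexp. pose proof (Rinv_0_lt_compat _ Ha).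
  assert (exp (- alpha t * x) <= exp 0) by (apply exp_le_mono; nra).
  rewrite exp_0 in H0. nra.
Qed.

Lemma uexp_ge_quadratic alpha t x : 0 < alpha t -> - alpha t * x <= 1/2 ->
  x - 2 * alpha t * x ^ 2 <= uexp alpha t x.
Proof.
  intros Ha Hx. unfold uexp. pose proof (exp_le_quadratic _ Hx).
  apply (Rmult_le_reg_l (alpha t)); auto. rewrite <- Rmult_assoc, Rinv_r; nra.
Qed.

(* [q_t < 1] keeps [P(tau > t)] positive, and then [q_t > 0] charges the atom [(t, t+1]]. *)
Lemma atom_law_pos T P : is_atom_law T P -> (forall t, (t < T)%nat -> 0 < qprob T P t < 1) ->
  forall k, (1 <= k <= T + 1)%nat -> 0 < P k.
Proof.
  intros [_ Hsum] Hq.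
  assert (Hsurv : forall t, (t <= T)%nat -> 0 < surv T P t).
  { induction t as [| t IHt]; intros Ht; [unfold surv; simpl; lra |].
    pose proof (IHt ltac:(lia)) as Hs. pose proof (Hq t ltac:(lia)) as [_ Hq1].
    unfold qprob in Hq1. apply Rmult_lt_compat_r with (r := surv T P t) in Hq1; auto.
    unfold Rdiv in Hq1. rewrite Rmult_assoc, Rinv_l, Rmult_1_r in Hq1 by lra.
    unfold surv in *. simpl. lra. }
  intros k Hk. destruct (Nat.eq_dec k (T + 1)) as [-> | Hne].
  - pose proof (Hsurv T ltac:(lia)). unfold surv in H.
    rewrite Nat.add_1_r in *. simpl in Hsum. lra.
  - destruct k as [| t]; [lia |].
    pose proof (Hsurv t ltac:(lia)) as Hs. pose proof (Hq t ltac:(lia)) as [Hq0 _].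
    unfold qprob in Hq0. apply Rmult_lt_compat_r with (r := surv T P t) in Hq0; auto.
    unfold Rdiv in Hq0. rewrite Rmult_0_l, Rmult_assoc, Rinv_l, Rmult_1_r in Hq0 by lra. auto.
Qed.

Lemma Bdisc_pos r t : (forall k, (1 <= k <= t)%nat -> 0 <= r k) -> 0 < Bdisc r t.
Proof.
  unfold Bdisc. induction t as [| t IHt]; intros Hr; simpl; [lra |].
  pose proof (IHt ltac:(intros; apply Hr; lia)). pose proof (Hr (S t) ltac:(lia)). nra.
Qed.

Section Market.

Variables (T : nat) (P r : nat -> R).
Hypothesis hT : (1 <= T)%nat.
Hypothesis hP : forall k, (1 <= k <= T + 1)%nat -> 0 < P k.
Hypothesis hPsum : sum_1n (T + 1) P = 1.
Hypothesis hB : forall t, (1 <= t <= T)%nat -> 0 < Bdisc r t.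

Definition tolerance (alpha : nat -> R) : R := sum_1n T (fun t => / alpha t).

Definition loss (alpha : nat -> R) (Y : nat -> nat -> R) : R :=
  sum_1n T (fun t => Expect T P (fun k => / alpha t * exp (- alpha t * (Y t k / Bdisc r t)))).

(* [gap] is the infimum of [loss] over budget-feasible plans, as [exp_util = tolerance - loss]. *)
Definition gap (alpha W : nat -> R) : R := tolerance alpha - Uval T P r alpha W.

Definition certainty_equiv (alpha W : nat -> R) : R :=
  - tolerance alpha * ln (gap alpha W / tolerance alpha).

Lemma tolerance_le_of_lower_bound alpha M : 0 < M -> (forall t, (1 <= t <= T)%nat -> M < alpha t) ->
  tolerance alpha <= INR T / M.
Proof.
  intros HM Ha. unfold Rdiv. rewrite <- sum_1n_const. apply sum_1n_le. intros t Ht.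
  apply Rinv_le_contravar; [| left]; auto.
Qed.

Definition terminal_plan (W : nat -> R) : nat -> nat -> R :=
  fun t k => if Nat.eqb t T then Bdisc r T * W k else 0.

Lemma terminal_plan_adapted W : adapted T (terminal_plan W).
Proof.
  intros t k k' Ht Hk Hk' Htk Htk'. unfold terminal_plan.
  destruct (Nat.eqb_spec t T) as [-> |]; auto.
  replace k with (T + 1)%nat by lia. replace k' with (T + 1)%nat by lia. auto.
Qed.

Lemma terminal_plan_budget W : budget T P r (terminal_plan W) W.
Proof.
  intros k Hk _. rewrite sum_1n_last; auto.
  - unfold terminal_plan. rewrite Nat.eqb_refl. field. pose proof (hB T ltac:(lia)). lra.
  - intros t Ht. unfold terminal_plan. destruct (Nat.eqb_spec t T); [lia |]. unfold Rdiv; ring.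
Qed.

Section Preferences.

Variable alpha : nat -> R.
Hypothesis halpha : forall t, (1 <= t <= T)%nat -> 0 < alpha t.

Lemma tolerance_pos : 0 < tolerance alpha.
Proof.
  unfold tolerance. destruct T as [| n]; [lia |]. simpl.
  pose proof (sum_1n_nonneg n (fun t => / alpha t)
    ltac:(intros; left; apply Rinv_0_lt_compat, halpha; lia)).
  pose proof (Rinv_0_lt_compat _ (halpha (S n) ltac:(lia))). lra.
Qed.

Lemma exp_util_eq_loss Y : exp_util T P r alpha Y = tolerance alpha - loss alpha Y.
Proof.
  unfold exp_util, tolerance, loss. rewrite <- sum_1n_sub.
  apply sum_1n_ext. intros t _.
  rewrite <- (Expect_const T P (/ alpha t)) at 1 by auto. unfold Rminus.
  rewrite <- Expect_opp, <- Expect_add.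
  apply Expect_ext. intros k _. unfold uexp. ring.
Qed.

Lemma exp_util_as_Expect Y : exp_util T P r alpha Y =
  Expect T P (fun k => sum_1n T (fun t => uexp alpha t (Y t k / Bdisc r t))).
Proof.
  unfold exp_util, Expect. rewrite sum_1n_comm. apply sum_1n_ext. intros k _.
  rewrite <- sum_1n_scal. auto.
Qed.

Lemma loss_nonneg Y : 0 <= loss alpha Y.
Proof.
  apply sum_1n_nonneg. intros t Ht. apply sum_1n_nonneg. intros k Hk.
  pose proof (hP k Hk). pose proof (Rinv_0_lt_compat _ (halpha t Ht)).
  pose proof (exp_pos (- alpha t * (Y t k / Bdisc r t))).
  apply Rmult_le_pos; [lra |]. apply Rmult_le_pos; lra.
Qed.

Lemma exp_util_terminal_plan W :
  exp_util T P r alpha (terminal_plan W) = Expect T P (fun k => uexp alpha T (W k)).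
Proof.
  unfold exp_util. rewrite sum_1n_last; auto.
  - unfold terminal_plan. rewrite Nat.eqb_refl. apply Expect_ext. intros k _.
    pose proof (hB T ltac:(lia)). f_equal. field. lra.
  - intros t Ht. unfold terminal_plan. destruct (Nat.eqb_spec t T); [lia |].
    rewrite (Expect_ext _ _ _ (fun _ => 0)), Expect_const; auto.
    intros k _. unfold uexp, Rdiv. rewrite Rmult_0_l, Rmult_0_r, exp_0. ring.
Qed.

Lemma Uval_is_lub W : is_lub (attainable T P r alpha W) (Uval T P r alpha W).
Proof.
  unfold Uval. apply epsilon_spec.
  destruct (completeness (attainable T P r alpha W)) as [m Hm].
  - exists (tolerance alpha). intros v (Y & _ & _ & ->).
    rewrite exp_util_eq_loss. pose proof (loss_nonneg Y). lra.
  - exists (exp_util T P r alpha (terminal_plan W)). exists (terminal_plan W).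
    split; [apply terminal_plan_adapted | split; [apply terminal_plan_budget | auto]].
  - exists m; auto.
Qed.

Lemma Uval_ge_exp_util W Y : adapted T Y -> budget T P r Y W ->
  exp_util T P r alpha Y <= Uval T P r alpha W.
Proof. intros HY HW. apply (Uval_is_lub W). exists Y; auto. Qed.

Lemma Uval_le W b : (forall Y, adapted T Y -> budget T P r Y W -> exp_util T P r alpha Y <= b) ->
  Uval T P r alpha W <= b.
Proof. intros H. apply (Uval_is_lub W). intros v (Y & HY & HW & ->). auto. Qed.

Lemma Uval_ge_terminal W : Expect T P (fun k => uexp alpha T (W k)) <= Uval T P r alpha W.
Proof.
  rewrite <- exp_util_terminal_plan.
  apply Uval_ge_exp_util; [apply terminal_plan_adapted | apply terminal_plan_budget].
Qed.

Lemma Uval_le_Expect W : Uval T P r alpha W <= Expect T P W.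
Proof.
  apply Uval_le. intros Y _ HW. rewrite exp_util_as_Expect.
  apply Expect_le; [intros k Hk; left; auto |]. intros k Hk.
  rewrite <- (HW k Hk (hP k Hk)). apply sum_1n_le. intros t Ht. apply uexp_le_id; auto.
Qed.

Lemma Uval_le_atom W j : (1 <= j <= T + 1)%nat -> W j <= 0 ->
  Uval T P r alpha W <= tolerance alpha - P j * tolerance alpha.
Proof.
  intros Hj HWj. apply Uval_le. intros Y _ HW. rewrite exp_util_as_Expect.
  set (K := tolerance alpha).
  set (g := fun k => sum_1n T (fun t => uexp alpha t (Y t k / Bdisc r t))).
  assert (Hg : forall k, (1 <= k <= T + 1)%nat -> g k <= K).
  { intros k _. apply sum_1n_le. intros t Ht. apply uexp_le_inv; auto. }
  assert (Hgj : g j <= 0).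
  { rewrite <- (HW j Hj (hP j Hj)) in HWj. eapply Rle_trans; [| apply HWj].
    apply sum_1n_le. intros t Ht. apply uexp_le_id; auto. }
  pose proof (sum_1n_ge_term (T + 1) (fun k => P k * (K - g k)) j) as Hterm.
  change (sum_1n (T + 1) (fun k => P k * (K - g k))) with (Expect T P (fun k => K - g k)) in Hterm.
  unfold Rminus in Hterm. rewrite Expect_add, Expect_opp, Expect_const in Hterm by auto.
  assert (P j * g j <= 0) by (pose proof (hP j Hj); nra).
  enough (P j * (K + - g j) <= K + - Expect T P g) by nra.
  apply Hterm; auto. intros k Hk. pose proof (hP k Hk). pose proof (Hg k Hk). nra.
Qed.

Lemma Uval_zero : Uval T P r alpha (fun _ => 0) = 0.
Proof.
  apply Rle_antisym.
  - pose proof (Uval_le_Expect (fun _ => 0)) as H. rewrite Expect_const in H; auto.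
  - pose proof (Uval_ge_terminal (fun _ => 0)) as H. unfold uexp in H.
    rewrite Rmult_0_r, exp_0, Rminus_diag, Rmult_0_r, Expect_const in H; auto.
Qed.

Lemma gap_le_loss W Y : adapted T Y -> budget T P r Y W -> gap alpha W <= loss alpha Y.
Proof.
  intros HY HW. unfold gap. pose proof (Uval_ge_exp_util W Y HY HW) as H.
  rewrite exp_util_eq_loss in H. lra.
Qed.

Lemma gap_ge W b : (forall Y, adapted T Y -> budget T P r Y W -> b <= loss alpha Y) ->
  b <= gap alpha W.
Proof.
  intros H. unfold gap. enough (Uval T P r alpha W <= tolerance alpha - b) by lra.
  apply Uval_le. intros Y HY HW. rewrite exp_util_eq_loss. pose proof (H Y HY HW). lra.
Qed.

(* Spreading an extra amount c over the dates in proportion to the risk tolerances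
   1/alpha_t multiplies every term of the loss by the same factor exp(-c/K). *)
Definition shift_plan (Y : nat -> nat -> R) (c : R) : nat -> nat -> R :=
  fun t k => Y t k + Bdisc r t * (c / (alpha t * tolerance alpha)).

Lemma shift_plan_adapted Y c : adapted T Y -> adapted T (shift_plan Y c).
Proof. intros HY t k k' Ht Hk Hk' Htk Htk'. unfold shift_plan. rewrite (HY t k k'); auto. Qed.

Lemma shift_plan_budget Y W c : budget T P r Y W ->
  budget T P r (shift_plan Y c) (fun k => W k + c).
Proof.
  intros HW k Hk Hpk. pose proof tolerance_pos as HK. unfold shift_plan.
  rewrite (sum_1n_ext _ _ (fun t => Y t k / Bdisc r t + c / tolerance alpha * / alpha t)).
  - rewrite sum_1n_add, sum_1n_scal, HW by auto. fold (tolerance alpha). field. lra.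
  - intros t Ht. pose proof (hB t Ht). pose proof (halpha t Ht). field. lra.
Qed.

Lemma loss_shift_plan Y c :
  loss alpha (shift_plan Y c) = exp (- c / tolerance alpha) * loss alpha Y.
Proof.
  pose proof tolerance_pos as HK.
  unfold loss. rewrite <- sum_1n_scal. apply sum_1n_ext. intros t Ht.
  rewrite <- Expect_scal. apply Expect_ext. intros k _. unfold shift_plan.
  pose proof (hB t Ht). pose proof (halpha t Ht).
  replace (- alpha t * ((Y t k + Bdisc r t * (c / (alpha t * tolerance alpha))) / Bdisc r t))
    with (- alpha t * (Y t k / Bdisc r t) + - c / tolerance alpha) by (field; lra).
  rewrite exp_plus. ring.
Qed.

Lemma gap_shift_le W c : exp (c / tolerance alpha) * gap alpha (fun k => W k + c) <= gap alpha W.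
Proof.
  pose proof tolerance_pos as HK.
  apply gap_ge. intros Y HY HW.
  pose proof (gap_le_loss _ _ (shift_plan_adapted Y c HY) (shift_plan_budget Y W c HW)) as H.
  rewrite loss_shift_plan in H.
  apply (Rmult_le_compat_l (exp (c / tolerance alpha))) in H; [| left; apply exp_pos].
  rewrite <- Rmult_assoc, <- exp_plus in H.
  replace (c / tolerance alpha + - c / tolerance alpha) with 0 in H by (field; lra).
  rewrite exp_0, Rmult_1_l in H. exact H.
Qed.

Lemma gap_shift W c : gap alpha (fun k => W k + c) = exp (- c / tolerance alpha) * gap alpha W.
Proof.
  pose proof tolerance_pos as HK.
  pose proof (gap_shift_le W c) as H1.
  pose proof (gap_shift_le (fun k => W k + c) (- c)) as H2. cbv beta in H2.
  replace (fun k => W k + c + - c) with W in H2 by (apply functional_extensionality; intros; ring).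
  assert (Hinv : exp (- c / tolerance alpha) * exp (c / tolerance alpha) = 1).
  { rewrite <- exp_plus. replace (- c / tolerance alpha + c / tolerance alpha) with 0 by (field; lra).
    apply exp_0. }
  pose proof (exp_pos (- c / tolerance alpha)).
  apply (Rmult_le_compat_l (exp (- c / tolerance alpha))) in H1; [| lra].
  rewrite <- Rmult_assoc, Hinv, Rmult_1_l in H1.
  lra.
Qed.

Lemma Uval_centered_nonpos W : Uval T P r alpha (fun k => W k - Expect T P W) <= 0.
Proof.
  pose proof (Uval_le_Expect (fun k => W k - Expect T P W)) as H.
  rewrite (Expect_ext _ _ (fun k => W k - Expect T P W) (fun k => W k + - Expect T P W)) in H
    by (intros; ring).
  rewrite Expect_add, Expect_const in H by auto. lra.
Qed.

Lemma gap_pos W : 0 < gap alpha W.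
Proof.
  pose proof tolerance_pos as HK. pose proof (Uval_centered_nonpos W) as Hc.
  pose proof (gap_shift (fun k => W k - Expect T P W) (Expect T P W)) as Hs. cbv beta in Hs.
  replace (fun k => W k - Expect T P W + Expect T P W) with W in Hs
    by (apply functional_extensionality; intros; ring).
  rewrite Hs. apply Rmult_lt_0_compat; [apply exp_pos | unfold gap; lra].
Qed.

Lemma certainty_equiv_shift W c :
  certainty_equiv alpha (fun k => W k + c) = certainty_equiv alpha W + c.
Proof.
  pose proof tolerance_pos as HK. pose proof (gap_pos W) as Hg.
  unfold certainty_equiv. rewrite gap_shift.
  replace (exp (- c / tolerance alpha) * gap alpha W / tolerance alpha)
    with (exp (- c / tolerance alpha) * (gap alpha W / tolerance alpha)) by (field; lra).
  rewrite ln_mult, ln_exp by (try apply exp_pos; apply Rdiv_lt_0_compat; lra).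
  field. lra.
Qed.

Lemma certainty_equiv_const c : certainty_equiv alpha (fun _ => c) = c.
Proof.
  pose proof tolerance_pos as HK.
  replace (fun _ : nat => c) with (fun k => (fun _ : nat => 0) k + c)
    by (apply functional_extensionality; intros; ring).
  rewrite certainty_equiv_shift. unfold certainty_equiv, gap. rewrite Uval_zero.
  replace ((tolerance alpha - 0) / tolerance alpha) with 1 by (field; lra).
  rewrite ln_1. ring.
Qed.

Lemma certainty_equiv_le W rho : 0 < rho ->
  Uval T P r alpha W <= tolerance alpha - rho * tolerance alpha ->
  certainty_equiv alpha W <= - tolerance alpha * ln rho.
Proof.
  intros Hrho HU. pose proof tolerance_pos as HK. unfold certainty_equiv.
  assert (rho <= gap alpha W / tolerance alpha).
  { apply (Rmult_le_reg_r (tolerance alpha)); auto. unfold gap in *.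
    replace ((tolerance alpha - Uval T P r alpha W) / tolerance alpha * tolerance alpha)
      with (tolerance alpha - Uval T P r alpha W) by (field; lra). lra. }
  pose proof (ln_le_mono _ _ Hrho H). nra.
Qed.

Lemma certainty_equiv_ge W eta : 0 <= eta -> - eta <= Uval T P r alpha W ->
  - eta <= certainty_equiv alpha W.
Proof.
  intros Heta HU. pose proof tolerance_pos as HK. pose proof (gap_pos W) as Hg.
  unfold certainty_equiv.
  pose proof (ln_le_sub1 (gap alpha W / tolerance alpha) ltac:(apply Rdiv_lt_0_compat; lra)) as Hln.
  assert (Hq : gap alpha W / tolerance alpha - 1 <= eta / tolerance alpha).
  { unfold gap in *. apply (Rmult_le_reg_r (tolerance alpha)); auto.
    replace ((eta / tolerance alpha) * tolerance alpha) with eta by (field; lra).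
    replace (((tolerance alpha - Uval T P r alpha W) / tolerance alpha - 1) * tolerance alpha)
      with (- Uval T P r alpha W) by (field; lra). lra. }
  assert (tolerance alpha * (eta / tolerance alpha) = eta) by (field; lra).
  nra.
Qed.

Lemma certainty_equiv_le_Expect W : certainty_equiv alpha W <= Expect T P W.
Proof.
  pose proof tolerance_pos as HK.
  pose proof (certainty_equiv_le (fun k => W k - Expect T P W) 1 Rlt_0_1) as H.
  rewrite ln_1, Rmult_0_r, Rmult_1_l in H.
  pose proof (certainty_equiv_shift (fun k => W k - Expect T P W) (Expect T P W)) as Hs.
  cbv beta in Hs. replace (fun k => W k - Expect T P W + Expect T P W) with W in Hs
    by (apply functional_extensionality; intros; ring).
  pose proof (Uval_centered_nonpos W). lra.
Qed.

Lemma Uval_eq_of_certainty_equiv W1 W2 :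
  certainty_equiv alpha W1 = certainty_equiv alpha W2 -> Uval T P r alpha W1 = Uval T P r alpha W2.
Proof.
  intros H. pose proof tolerance_pos as HK. pose proof (gap_pos W1). pose proof (gap_pos W2).
  unfold certainty_equiv in H.
  apply Rmult_eq_reg_l in H; [| lra].
  apply ln_inv in H; try (apply Rdiv_lt_0_compat; lra).
  unfold gap in H. unfold Rdiv in H. apply Rmult_eq_reg_r in H; [lra |].
  apply Rinv_neq_0_compat; lra.
Qed.

Lemma Hprice_eq w Z : Hprice T P r alpha w Z = - certainty_equiv alpha (fun k => - Z k).
Proof.
  assert (Hce : forall h, certainty_equiv alpha (fun k => w + h - Z k) =
                          certainty_equiv alpha (fun k => - Z k) + (w + h)).
  { intros h. rewrite <- certainty_equiv_shift. f_equal.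
    apply functional_extensionality; intros; ring. }
  unfold Hprice. set (h := epsilon _ _).
  assert (Hh : Uval T P r alpha (fun k => w + h - Z k) = Uval T P r alpha (fun _ => w)).
  { unfold h. apply epsilon_spec. exists (- certainty_equiv alpha (fun k => - Z k)).
    apply Uval_eq_of_certainty_equiv. rewrite Hce, certainty_equiv_const. ring. }
  assert (Hce_eq : certainty_equiv alpha (fun k => w + h - Z k) = certainty_equiv alpha (fun _ => w))
    by (unfold certainty_equiv, gap; rewrite Hh; auto).
  rewrite Hce, certainty_equiv_const in Hce_eq. lra.
Qed.

Lemma Hprice_ge_Expect w Z : Expect T P Z <= Hprice T P r alpha w Z.
Proof.
  rewrite Hprice_eq. pose proof (certainty_equiv_le_Expect (fun k => - Z k)) as H.
  rewrite Expect_opp in H. lra.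
Qed.

Lemma Hprice_le_of_terminal w Z c eta : 0 <= eta ->
  - eta <= Expect T P (fun k => uexp alpha T (- Z k + c)) -> Hprice T P r alpha w Z <= c + eta.
Proof.
  intros Heta HE. pose proof (Uval_ge_terminal (fun k => - Z k + c)) as HU.
  pose proof (certainty_equiv_ge (fun k => - Z k + c) eta Heta ltac:(lra)) as Hce.
  rewrite (certainty_equiv_shift (fun k => - Z k)) in Hce. rewrite Hprice_eq. lra.
Qed.

Lemma Hprice_le_Hinf w Z : Hprice T P r alpha w Z <= Hinf T Z.
Proof.
  rewrite <- (Rplus_0_r (Hinf T Z)). apply Hprice_le_of_terminal; [lra |].
  rewrite Ropp_0. apply Expect_nonneg; [intros k Hk; left; auto |].
  intros k Hk. apply uexp_nonneg; [apply halpha; lia |].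
  pose proof (max_1n_ge (T + 1) Z ltac:(lia) k Hk). unfold Hinf. lra.
Qed.

Lemma Hprice_le_Expect_add w Z B :
  (forall k, (1 <= k <= T + 1)%nat -> Rabs (Z k - Expect T P Z) <= B) -> alpha T * B <= 1/2 ->
  Hprice T P r alpha w Z <= Expect T P Z + 2 * alpha T * B ^ 2.
Proof.
  intros HB HaB. pose proof (halpha T ltac:(lia)) as HaT.
  apply Hprice_le_of_terminal; [nra |].
  set (eta := 2 * alpha T * B ^ 2).
  assert (Hlow : Expect T P (fun k => (- Z k + Expect T P Z) + - eta) <=
                 Expect T P (fun k => uexp alpha T (- Z k + Expect T P Z))).
  { apply Expect_le; [intros k Hk; left; auto |]. intros k Hk.
    pose proof (HB k Hk) as Hk'. pose proof (Rle_abs (Z k - Expect T P Z)).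
    pose proof (Rle_abs (- (Z k - Expect T P Z))). rewrite Rabs_Ropp in H0.
    assert (- alpha T * (- Z k + Expect T P Z) <= 1/2) by nra.
    pose proof (uexp_ge_quadratic alpha T _ HaT H1).
    assert ((- Z k + Expect T P Z) ^ 2 <= B ^ 2) by nra.
    unfold eta. nra. }
  rewrite !Expect_add, Expect_opp, !Expect_const in Hlow by auto. lra.
Qed.

Lemma Hprice_ge_Hinf_add w Z j : (1 <= j <= T + 1)%nat -> Z j = Hinf T Z ->
  Hinf T Z + tolerance alpha * ln (P j) <= Hprice T P r alpha w Z.
Proof.
  intros Hj HZj.
  pose proof (Uval_le_atom (fun k => - Z k + Hinf T Z) j Hj ltac:(lra)) as HU.
  pose proof (certainty_equiv_le _ (P j) (hP j Hj) HU) as Hce.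
  rewrite (certainty_equiv_shift (fun k => - Z k)) in Hce. rewrite Hprice_eq. lra.
Qed.

End Preferences.
Lemma tolerance_scale alpha p : (forall t, (1 <= t <= T)%nat -> 0 < alpha t) -> 0 < p ->
  tolerance (fun t => p * alpha t) = tolerance alpha / p.
Proof.
  intros Ha Hp. unfold tolerance, Rdiv. rewrite Rmult_comm, <- sum_1n_scal.
  apply sum_1n_ext. intros t Ht. pose proof (Ha t Ht). field. lra.
Qed.

(* Passing from risk aversions [p * alpha] to [p' * alpha] with [rho = p / p'], the plan
   [rho * Y] keeps every exponential term of the loss, up to the factor [rho], except at
   maturity, where the missing wealth [(1 - rho) * W] is added back. *)
Definition rescale_plan (Y : nat -> nat -> R) (W : nat -> R) (rho : R) : nat -> nat -> R :=
  fun t k => rho * Y t k + (if Nat.eqb t T then (1 - rho) * Bdisc r T * W k else 0).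

Lemma rescale_plan_adapted Y W rho : adapted T Y -> adapted T (rescale_plan Y W rho).
Proof.
  intros HY t k k' Ht Hk Hk' Htk Htk'. unfold rescale_plan.
  rewrite (HY t k k'); auto. destruct (Nat.eqb_spec t T) as [-> |]; auto.
  replace k with (T + 1)%nat by lia. replace k' with (T + 1)%nat by lia. auto.
Qed.

Lemma rescale_plan_budget Y W rho : budget T P r Y W -> budget T P r (rescale_plan Y W rho) W.
Proof.
  intros HW k Hk Hpk. unfold rescale_plan.
  rewrite (sum_1n_ext _ _ (fun t => rho * (Y t k / Bdisc r t) +
                                    (if Nat.eqb t T then (1 - rho) * W k else 0))).
  - rewrite sum_1n_add, sum_1n_scal, HW by auto. rewrite (sum_1n_last T); auto.
    + rewrite Nat.eqb_refl. ring.
    + intros t Ht. destruct (Nat.eqb_spec t T); [lia | auto].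
  - intros t Ht. pose proof (hB t Ht). destruct (Nat.eqb_spec t T) as [-> |]; field; lra.
Qed.

Lemma loss_rescale_plan alpha Y W b p p' : (forall t, (1 <= t <= T)%nat -> 0 < alpha t) ->
  0 < p -> 0 < p' -> (forall k, (1 <= k <= T + 1)%nat -> Rabs (W k) <= b) ->
  loss (fun t => p' * alpha t) (rescale_plan Y W (p / p')) <=
  p / p' * exp (alpha T * b * Rabs (p' - p)) * loss (fun t => p * alpha t) Y.
Proof.
  intros Ha Hp Hp' HW. unfold loss. rewrite <- sum_1n_scal. apply sum_1n_le. intros t Ht.
  rewrite <- Expect_scal. apply Expect_le; [intros k Hk; left; auto |]. intros k Hk.
  pose proof (hB t Ht). pose proof (Ha t Ht). pose proof (Ha T ltac:(lia)).
  assert (Hexp : exists s, s <= alpha T * b * Rabs (p' - p) /\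
    - (p' * alpha t) * (rescale_plan Y W (p / p') t k / Bdisc r t) =
    - (p * alpha t) * (Y t k / Bdisc r t) + s).
  { unfold rescale_plan. destruct (Nat.eqb_spec t T) as [-> | Hne].
    - exists (alpha T * - ((p' - p) * W k)). split; [| field; lra].
      rewrite Rmult_assoc. apply Rmult_le_compat_l; [lra |].
      pose proof (Rle_abs (- ((p' - p) * W k))) as Habs.
      rewrite Rabs_Ropp, Rabs_mult in Habs.
      pose proof (Rmult_le_compat_l _ _ _ (Rabs_pos (p' - p)) (HW k Hk)). lra.
    - exists 0. split; [| field; lra].
      pose proof (HW k Hk). pose proof (Rabs_pos (W k)). pose proof (Rabs_pos (p' - p)).
      apply Rmult_le_pos; [apply Rmult_le_pos |]; lra. }
  destruct Hexp as (s & Hs & ->). rewrite exp_plus.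
  replace (/ (p' * alpha t)) with (p / p' * / (p * alpha t)) by (field; lra).
  set (E := exp (- (p * alpha t) * (Y t k / Bdisc r t))).
  assert (Hc : 0 < p / p' * / (p * alpha t) * E).
  { apply Rmult_lt_0_compat; [| apply exp_pos].
    apply Rmult_lt_0_compat; [apply Rdiv_lt_0_compat | apply Rinv_0_lt_compat]; nra. }
  pose proof (exp_le_mono _ _ Hs).
  replace (p / p' * / (p * alpha t) * (E * exp s)) with (p / p' * / (p * alpha t) * E * exp s) by ring.
  replace (p / p' * exp (alpha T * b * Rabs (p' - p)) * (/ (p * alpha t) * E))
    with (p / p' * / (p * alpha t) * E * exp (alpha T * b * Rabs (p' - p))) by ring.
  apply Rmult_le_compat_l; lra.
Qed.

Lemma gap_rescale alpha W b p p' : (forall t, (1 <= t <= T)%nat -> 0 < alpha t) ->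
  0 < p -> 0 < p' -> (forall k, (1 <= k <= T + 1)%nat -> Rabs (W k) <= b) ->
  p' * gap (fun t => p' * alpha t) W <=
  exp (alpha T * b * Rabs (p' - p)) * (p * gap (fun t => p * alpha t) W).
Proof.
  intros Ha Hp Hp' HW.
  assert (Hscaled : forall q, 0 < q -> forall t, (1 <= t <= T)%nat -> 0 < q * alpha t)
    by (intros q Hq t Ht; apply Rmult_lt_0_compat; auto).
  set (e := exp (alpha T * b * Rabs (p' - p))). assert (He : 0 < e) by apply exp_pos.
  enough (p' / (e * p) * gap (fun t => p' * alpha t) W <= gap (fun t => p * alpha t) W) as H.
  { apply (Rmult_le_compat_l (e * p)) in H; [| nra].
    replace (e * p * (p' / (e * p) * gap (fun t => p' * alpha t) W))
      with (p' * gap (fun t => p' * alpha t) W) in H by (field; lra). lra. }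
  apply (gap_ge _ (Hscaled p Hp)). intros Y HY HWY.
  pose proof (gap_le_loss _ (Hscaled p' Hp') W _ (rescale_plan_adapted Y W (p / p') HY)
    (rescale_plan_budget Y W (p / p') HWY)) as Hgap.
  pose proof (loss_rescale_plan alpha Y W b p p' Ha Hp Hp' HW) as Hloss. fold e in Hloss.
  assert (Hfac : 0 < p' / (e * p)) by (apply Rdiv_lt_0_compat; nra).
  apply (Rmult_le_compat_l _ _ _ (Rlt_le _ _ Hfac)) in Hgap.
  apply (Rmult_le_compat_l _ _ _ (Rlt_le _ _ Hfac)) in Hloss.
  replace (p' / (e * p) * (p / p' * e * loss (fun t => p * alpha t) Y))
    with (loss (fun t => p * alpha t) Y) in Hloss by (field; lra).
  lra.
Qed.

Lemma scaled_certainty_equiv alpha W p : (forall t, (1 <= t <= T)%nat -> 0 < alpha t) -> 0 < p ->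
  p * certainty_equiv (fun t => p * alpha t) W =
  - tolerance alpha * ln (p * gap (fun t => p * alpha t) W / tolerance alpha).
Proof.
  intros Ha Hp. pose proof (tolerance_pos _ Ha). unfold certainty_equiv.
  rewrite tolerance_scale by auto.
  replace (gap (fun t => p * alpha t) W / (tolerance alpha / p))
    with (p * gap (fun t => p * alpha t) W / tolerance alpha) by (field; lra).
  field. lra.
Qed.

Lemma scaled_certainty_equiv_lipschitz alpha W b p p' :
  (forall t, (1 <= t <= T)%nat -> 0 < alpha t) -> 0 < p -> 0 < p' ->
  (forall k, (1 <= k <= T + 1)%nat -> Rabs (W k) <= b) ->
  Rabs (p' * certainty_equiv (fun t => p' * alpha t) W - p * certainty_equiv (fun t => p * alpha t) W)
  <= tolerance alpha * (alpha T * b) * Rabs (p' - p).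
Proof.
  intros Ha Hp Hp' HW. pose proof (tolerance_pos _ Ha) as HK.
  assert (Hone : forall x y, 0 < x -> 0 < y ->
    x * certainty_equiv (fun t => x * alpha t) W - y * certainty_equiv (fun t => y * alpha t) W
    <= tolerance alpha * (alpha T * b) * Rabs (y - x)).
  { intros x y Hx Hy. rewrite !scaled_certainty_equiv by auto.
    assert (Hscaled : forall q, 0 < q -> forall t, (1 <= t <= T)%nat -> 0 < q * alpha t)
      by (intros q Hq t Ht; apply Rmult_lt_0_compat; auto).
    pose proof (gap_pos _ (Hscaled x Hx) W). pose proof (gap_pos _ (Hscaled y Hy) W).
    pose proof (gap_rescale alpha W b x y Ha Hx Hy HW) as Hr.
    set (e := alpha T * b * Rabs (y - x)) in *.
    set (gx := x * gap (fun t => x * alpha t) W / tolerance alpha).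
    set (gy := y * gap (fun t => y * alpha t) W / tolerance alpha).
    assert (Hgx : 0 < gx) by (apply Rdiv_lt_0_compat; nra).
    assert (Hgy : 0 < gy) by (apply Rdiv_lt_0_compat; nra).
    assert (Hq : gy <= exp e * gx).
    { unfold gx, gy, Rdiv. rewrite <- Rmult_assoc.
      apply Rmult_le_compat_r; [left; apply Rinv_0_lt_compat |]; lra. }
    apply ln_le_mono in Hq; auto. rewrite ln_mult, ln_exp in Hq by (auto; apply exp_pos).
    replace (tolerance alpha * (alpha T * b) * Rabs (y - x)) with (tolerance alpha * e)
      by (unfold e; ring).
    pose proof (Rmult_le_compat_l _ _ _ (Rlt_le _ _ HK) Hq). lra. }
  apply Rabs_le. pose proof (Hone p p' Hp Hp'). pose proof (Hone p' p Hp' Hp).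
  rewrite Rabs_minus_sym in H0. lra.
Qed.

Lemma scaled_Hprice_lipschitz alpha w Z b x y : (forall t, (1 <= t <= T)%nat -> 0 < alpha t) ->
  0 < x -> 0 < y -> (forall k, (1 <= k <= T + 1)%nat -> Rabs (Z k) <= b) ->
  Rabs (x * Hprice T P r (fun t => x * alpha t) w Z - y * Hprice T P r (fun t => y * alpha t) w Z)
  <= tolerance alpha * (alpha T * b) * Rabs (x - y).
Proof.
  intros Ha Hx Hy HZ.
  assert (Hscaled : forall q, 0 < q -> forall t, (1 <= t <= T)%nat -> 0 < q * alpha t)
    by (intros q Hq t Ht; apply Rmult_lt_0_compat; auto).
  rewrite !Hprice_eq by auto.
  replace (x * - certainty_equiv (fun t => x * alpha t) (fun k => - Z k) -
           y * - certainty_equiv (fun t => y * alpha t) (fun k => - Z k))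
    with (- (x * certainty_equiv (fun t => x * alpha t) (fun k => - Z k) -
             y * certainty_equiv (fun t => y * alpha t) (fun k => - Z k))) by ring.
  rewrite Rabs_Ropp. apply scaled_certainty_equiv_lipschitz; auto.
  intros k Hk. rewrite Rabs_Ropp. auto.
Qed.

Lemma Hprice_near_Expect w Z eps : 0 < eps -> exists delta, 0 < delta /\
  forall alpha, (forall t, (1 <= t <= T)%nat -> 0 < alpha t) -> alpha T < delta ->
  Hprice T P r alpha w Z < Expect T P Z + eps.
Proof.
  intros Heps. destruct (sum_1n_abs_bound (T + 1) (fun k => Z k - Expect T P Z)) as (B & HB0 & HB).
  exists (Rmin (/ (2 * (B + 1))) (eps / (2 * (B + 1) ^ 2))). split.
  - apply Rmin_pos; [apply Rinv_0_lt_compat | apply Rdiv_lt_0_compat]; nra.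
  - intros alpha Ha Hsmall. pose proof (Ha T ltac:(lia)) as HaT.
    pose proof (Rlt_le_trans _ _ _ Hsmall (Rmin_l _ _)) as H1.
    pose proof (Rlt_le_trans _ _ _ Hsmall (Rmin_r _ _)) as H2.
    assert (HaB : alpha T * (B + 1) < 1/2).
    { apply (Rmult_lt_compat_r (B + 1)) in H1; [| lra].
      replace (/ (2 * (B + 1)) * (B + 1)) with (1/2) in H1 by (field; lra). lra. }
    assert (Heta : 2 * alpha T * (B + 1) ^ 2 < eps).
    { apply (Rmult_lt_compat_r (2 * (B + 1) ^ 2)) in H2; [| nra].
      replace (eps / (2 * (B + 1) ^ 2) * (2 * (B + 1) ^ 2)) with eps in H2 by (field; lra). lra. }
    pose proof (Hprice_le_Expect_add alpha Ha w Z B HB ltac:(nra)). nra.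
Qed.

Lemma Hprice_near_Hinf w Z eps : 0 < eps -> exists kappa, 0 < kappa /\
  forall alpha, (forall t, (1 <= t <= T)%nat -> 0 < alpha t) -> tolerance alpha < kappa ->
  Hinf T Z - eps < Hprice T P r alpha w Z.
Proof.
  intros Heps. destruct (max_1n_attained (T + 1) Z ltac:(lia)) as (j & Hj & HZj).
  set (c := Rabs (ln (P j)) + 1). assert (Hc : 0 < c) by (pose proof (Rabs_pos (ln (P j))); unfold c; lra).
  exists (eps / c). split; [apply Rdiv_lt_0_compat; lra |].
  intros alpha Ha HK. pose proof (tolerance_pos _ Ha).
  pose proof (Hprice_ge_Hinf_add alpha Ha w Z j Hj (eq_sym HZj)) as Hge.
  assert (tolerance alpha * c < eps).
  { apply (Rmult_lt_compat_r c) in HK; auto. replace (eps / c * c) with eps in HK by (field; lra). lra. }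
  pose proof (Rle_abs (- ln (P j))). rewrite Rabs_Ropp in H1. unfold c in H0. nra.
Qed.

Lemma Hprice_scaled_onto w Z pi alpha : Expect T P Z < pi < Hinf T Z ->
  (forall t, (1 <= t <= T)%nat -> 0 < alpha t) ->
  exists p, 0 < p /\ pi = Hprice T P r (fun t => p * alpha t) w Z.
Proof.
  intros [Hlo Hhi] Ha. pose proof (Ha T ltac:(lia)) as HaT. pose proof (tolerance_pos _ Ha) as HK.
  assert (Hscaled : forall q, 0 < q -> forall t, (1 <= t <= T)%nat -> 0 < q * alpha t)
    by (intros q Hq t Ht; apply Rmult_lt_0_compat; auto).
  destruct (Hprice_near_Expect w Z (pi - Expect T P Z) ltac:(lra)) as (delta & Hd & Hnear0).
  destruct (Hprice_near_Hinf w Z (Hinf T Z - pi) ltac:(lra)) as (kappa & Hk & Hnear1).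
  set (p0 := delta / (2 * alpha T)). set (p1 := p0 + tolerance alpha / kappa).
  assert (Hp0 : 0 < p0) by (apply Rdiv_lt_0_compat; lra).
  assert (Hp01 : p0 < p1) by (pose proof (Rdiv_lt_0_compat _ _ HK Hk); unfold p1; lra).
  set (f := fun p => p * Hprice T P r (fun t => p * alpha t) w Z - p * pi).
  assert (Hf0 : f p0 < 0).
  { assert (p0 * alpha T < delta) by (unfold p0; field_simplify; lra).
    pose proof (Hnear0 _ (Hscaled p0 Hp0) H). unfold f. nra. }
  assert (Hf1 : 0 < f p1).
  { assert (tolerance (fun t => p1 * alpha t) < kappa).
    { rewrite tolerance_scale by (auto; lra). apply (Rmult_lt_reg_r p1); [lra |].
      replace (tolerance alpha / p1 * p1) with (tolerance alpha) by (field; lra).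
      unfold p1. replace (kappa * (p0 + tolerance alpha / kappa)) with (kappa * p0 + tolerance alpha)
        by (field; lra). nra. }
    pose proof (Hnear1 _ (Hscaled p1 ltac:(lra)) H). unfold f. nra. }
  destruct (sum_1n_abs_bound (T + 1) Z) as (b & Hb0 & Hb).
  assert (Hcont : forall a, p0 <= a <= p1 -> continuity_pt f a).
  { intros a Ha'. apply (continuity_pt_of_lipschitz_pos f (tolerance alpha * (alpha T * b) + Rabs pi));
      [| | lra].
    - apply Rplus_le_le_0_compat; [apply Rmult_le_pos; [| apply Rmult_le_pos] | apply Rabs_pos]; lra.
    - intros x y Hx Hy. unfold f.
      pose proof (scaled_Hprice_lipschitz alpha w Z b x y Ha Hx Hy Hb) as HL.
      pose proof (Rabs_triang (x * Hprice T P r (fun t => x * alpha t) w Z -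
                               y * Hprice T P r (fun t => y * alpha t) w Z) (- ((x - y) * pi))).
      rewrite Rabs_Ropp, Rabs_mult in H.
      replace (x * Hprice T P r (fun t => x * alpha t) w Z - y * Hprice T P r (fun t => y * alpha t) w Z
               + - ((x - y) * pi))
        with (x * Hprice T P r (fun t => x * alpha t) w Z - x * pi -
              (y * Hprice T P r (fun t => y * alpha t) w Z - y * pi)) in H by ring.
      lra. }
  destruct (IVT_interv f p0 p1 Hcont Hp01 Hf0 Hf1) as (z & Hz & Hfz).
  exists z. split; [lra |]. unfold f in Hfz.
  apply (Rmult_eq_reg_l z); lra.
Qed.

End Market.

Theorem theorem4p6 (T : nat) (P : nat -> R) (r : nat -> R) (Z : nat -> R) (w : R)
  (hT : (1 <= T)%nat)
  (hP : is_atom_law T P)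
  (hr : forall k, (1 <= k <= T)%nat -> 0 <= r k)
  (hq : forall t, (t < T)%nat -> 0 < qprob T P t < 1) :
  (* (a) *)
  (forall alpha : nat -> R, (forall t, (1 <= t <= T)%nat -> 0 < alpha t) ->
     Expect T P Z <= Hprice T P r alpha w Z <= Hinf T Z) /\
  (* (b) alpha -> 0+ *)
  (forall eps, 0 < eps -> exists delta, 0 < delta /\
     forall alpha : nat -> R, (forall t, (1 <= t <= T)%nat -> 0 < alpha t < delta) ->
       Rabs (Hprice T P r alpha w Z - Expect T P Z) < eps) /\
  (* (c) alpha -> infinity *)
  (forall eps, 0 < eps -> exists M,
     forall alpha : nat -> R, (forall t, (1 <= t <= T)%nat -> M < alpha t) ->
       Rabs (Hprice T P r alpha w Z - Hinf T Z) < eps) /\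
  (* (d) *)
  (forall pi, Expect T P Z < pi < Hinf T Z ->
     forall alpha : nat -> R, (forall t, (1 <= t <= T)%nat -> 0 < alpha t) ->
       exists p, 0 < p /\ pi = Hprice T P r (fun t => p * alpha t) w Z).
Proof.
  pose proof (atom_law_pos T P hP hq) as hPpos. destruct hP as [_ hPsum].
  assert (hB : forall t, (1 <= t <= T)%nat -> 0 < Bdisc r t)
    by (intros t Ht; apply Bdisc_pos; intros k Hk; apply hr; lia).
  split; [| split; [| split]].
  - intros alpha Ha. split; [apply Hprice_ge_Expect | apply Hprice_le_Hinf]; auto.
  - intros eps Heps.
    destruct (Hprice_near_Expect T P r hT hPpos hPsum hB w Z eps Heps) as (delta & Hd & Hnear).
    exists delta. split; auto. intros alpha Ha.
    assert (Ha' : forall t, (1 <= t <= T)%nat -> 0 < alpha t) by (intros t Ht; apply Ha; auto).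
    pose proof (Hprice_ge_Expect T P r hT hPpos hPsum hB alpha Ha' w Z).
    pose proof (Hnear alpha Ha' (proj2 (Ha T ltac:(lia)))).
    apply Rabs_def1; lra.
  - intros eps Heps.
    destruct (Hprice_near_Hinf T P r hT hPpos hPsum hB w Z eps Heps) as (kappa & Hk & Hnear).
    assert (HT : 0 < INR T) by (apply lt_0_INR; lia).
    exists (2 * INR T / kappa). intros alpha Ha.
    assert (HM : 0 < 2 * INR T / kappa) by (apply Rdiv_lt_0_compat; lra).
    assert (Ha' : forall t, (1 <= t <= T)%nat -> 0 < alpha t) by (intros t Ht; pose proof (Ha t Ht); lra).
    pose proof (tolerance_le_of_lower_bound T alpha _ HM Ha) as HK.
    replace (INR T / (2 * INR T / kappa)) with (kappa / 2) in HK by (field; lra).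
    pose proof (Hprice_le_Hinf T P r hT hPpos hPsum hB alpha Ha' w Z).
    pose proof (Hnear alpha Ha' ltac:(lra)).
    apply Rabs_def1; lra.
  - intros pi Hpi alpha Ha. apply Hprice_scaled_onto; auto.
Qed.
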